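(* Let $\{p_1,p_2,p_3\}=\mathcal{F}\subseteq\mathcal{O}$ be a normal family of three objects. Then at most $2$ faces of $G$ are type-$1$ singular faces for $\mathcal{F}$.
   Context: $G$ is a simple triangulated graph embedded on a sphere (every face is bounded by a triangle), with positive edge weights; $\mathrm{dist}(X,Y)$ denotes the minimum weight of a path between a vertex of $X$ and a vertex of $Y$. Each object $p$ has a location $\mathrm{loc}(p)$, a nonempty vertex set inducing a connected subgraph, and a radius $\mathrm{rad}(p)\ge 0$. A family $\mathcal{F}$ is normal if locations of its members are pairwise disjoint and $\mathrm{dist}(\mathrm{loc}(p_1),\mathrm{loc}(p_2))>\mathrm{rad}(p_1)-\mathrm{rad}(p_2)$ for all ordered pairs of distinct $p_1,p_2\in\mathcal{F}$. Standing assumption: all values $\mathrm{dist}(u,v)$ and $\mathrm{dist}(u,v)-\mathrm{rad}(p)$ are pairwise different and shortest paths are unique. The Voronoi partition $(M_p)_{p\in\mathcal{F}}$ assigns $v$ to $M_{p_0}$ iff $\mathrm{dist}(v,\mathrm{loc}(p_0))-\mathrm{rad}(p_0)$ is minimum over $p\in\mathcal{F}$. Regions $M_{p}$ and $M_{p'}$ ($p\ne p'$) meet at a face $f$ if the boundary of $f$ contains a vertex of $M_p$ and a vertex of $M_{p'}$. A face $f$ is a type-$1$ singular face for $\mathcal{F}$ if there are three distinct objects of $\mathcal{F}$ whose Voronoi regions pairwise meet at $f$. *)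

From HB Require Import structures.
From mathcomp Require Import all_boot all_order all_algebra.
From mathcomp Require Import all_classical all_reals ereal.
Set Implicit Arguments. Unset Strict Implicit. Unset Printing Implicit Defensive.
Import Order.TTheory GRing.Theory Num.Theory.
Local Open Scope classical_set_scope.
Local Open Scope ring_scope.

Section Defs.
Variables (R : realType) (V : finType).

(* [adj] : edges of a simple graph; [rot v] : cyclic successor of a neighbour
   of v in the clockwise order around v (a rotation system = an embedding). *)

Definition nbhd (adj : rel V) (v : V) : {set V} := [set u | adj v u].

Definition simple_graph (adj : rel V) : Prop :=
  symmetric adj /\ irreflexive adj.

Definition rotation_system (adj : rel V) (rot : V -> V -> V) : Prop :=
  forall v,
    {in nbhd adj v, forall u, rot v u \in nbhd adj v} /\
    {in nbhd adj v &, injective (rot v)} /\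
    {in nbhd adj v &, forall u u', fconnect (rot v) u u'}.

(* the face to the left of dart (u,v): the face permutation maps the dart
   (u,v) to (v, rot v u) *)
Definition face_darts (rot : V -> V -> V) (u v : V) : {set V * V} :=
  [set (u, v); (v, rot v u); (rot v u, u)].

Definition darts (adj : rel V) : {set V * V} := [set d | adj d.1 d.2].

(* every face is bounded by a triangle: following the face permutation three
   times from any dart (u,v) returns to (u,v) *)
Definition triangulated (adj : rel V) (rot : V -> V -> V) : Prop :=
  forall u v, adj u v -> rot (rot v u) v = u /\ rot u (rot v u) = v.

Definition faces (adj : rel V) (rot : V -> V -> V) : {set {set V * V}} :=
  [set face_darts rot d.1 d.2 | d in darts adj].

Definition face_vertices (f : {set V * V}) : {set V} := [set d.1 | d in f].

(* the rotation system describes a cellular embedding of a connected graph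
   in the sphere: Euler characteristic 2, i.e. #V - #E + #F = 2 with
   #E = #darts / 2 *)
Definition sphere_triangulation (adj : rel V) (rot : V -> V -> V) : Prop :=
  [/\ simple_graph adj, rotation_system adj rot, triangulated adj rot,
      (forall u v, connect adj u v) &
      (2 * (#|V| + #|faces adj rot|) = #|darts adj| + 4)%N].

Definition pos_weights (adj : rel V) (w : V -> V -> R) : Prop :=
  forall u v, adj u v -> w u v = w v u /\ 0 < w u v.

Fixpoint walk_weight (w : V -> V -> R) (x : V) (s : seq V) : R :=
  if s is y :: s' then w x y + walk_weight w y s' else 0.

(* s is a path u = x_0, x_1, ..., x_k = v (written as u :: s) *)
Definition is_path (adj : rel V) (u v : V) (s : seq V) : bool :=
  [&& path adj u s, uniq (u :: s) & last u s == v].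

Definition dist (adj : rel V) (w : V -> V -> R) (u v : V) : \bar R :=
  ereal_inf [set (walk_weight w u s)%:E | s in [set s | is_path adj u v s]].

Definition distS (adj : rel V) (w : V -> V -> R) (X Y : {set V}) : \bar R :=
  ereal_inf [set dist adj w x y | x in [set x | x \in X] & y in [set y | y \in Y]].

Definition shortest_path (adj : rel V) (w : V -> V -> R) (u v : V) (s : seq V) :=
  is_path adj u v s /\ (walk_weight w u s)%:E = dist adj w u v.

Variable I : finType.

Definition induced_connected (adj : rel V) (L : {set V}) : Prop :=
  forall x y, x \in L -> y \in L ->
    connect [rel a b | [&& adj a b, a \in L & b \in L]] x y.

Definition valid_objects (adj : rel V) (loc : I -> {set V}) (rad : I -> R) :=
  forall p, loc p != finset.set0 /\ induced_connected adj (loc p) /\ 0 <= rad p.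

Definition normal_family (adj : rel V) (w : V -> V -> R) (loc : I -> {set V}) (rad : I -> R) : Prop :=
  forall p1 p2, p1 != p2 ->
    (forall x, x \in loc p1 -> x \notin loc p2) /\
    ((rad p1 - rad p2)%:E < distS adj w (loc p1) (loc p2))%E.

(* standing assumption: all values dist(u,v) and dist(u,v) - rad(p) are
   pairwise different (identifying the symmetric pairs {u,v} and all diagonal
   pairs (u,u)), and shortest paths are unique *)
Definition shifted_dist (adj : rel V) (w : V -> V -> R) (rad : I -> R) (o : option I) (u v : V) : \bar R :=
  if o is Some p then (dist adj w u v - (rad p)%:E)%E else dist adj w u v.

Definition same_key (o o' : option I) (u v u' v' : V) : Prop :=
  o = o' /\ [\/ (u = v /\ u' = v'), (u = u' /\ v = v') | (u = v' /\ v = u')].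

Definition generic (adj : rel V) (w : V -> V -> R) (rad : I -> R) : Prop :=
  (forall o o' u v u' v',
     shifted_dist adj w rad o u v = shifted_dist adj w rad o' u' v' ->
     same_key o o' u v u' v') /\
  (forall u v s s', shortest_path adj w u v s -> shortest_path adj w u v s' ->
     s = s').

Definition in_voronoi (adj : rel V) (w : V -> V -> R) (loc : I -> {set V}) (rad : I -> R) (p0 : I) (v : V) :=
  forall p, (distS adj w [set v]%SET (loc p0) - (rad p0)%:E <=
            distS adj w [set v]%SET (loc p) - (rad p)%:E)%E.

Definition regions_meet (adj : rel V) (w : V -> V -> R) (loc : I -> {set V}) (rad : I -> R) (p p' : I) (f : {set V * V}) : Prop :=
  exists x y, [/\ x \in face_vertices f, y \in face_vertices f,
                  in_voronoi adj w loc rad p x & in_voronoi adj w loc rad p' y].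

Definition type1_singular (adj : rel V) (w : V -> V -> R) (loc : I -> {set V}) (rad : I -> R) (f : {set V * V}) : Prop :=
  exists p1 p2 p3, [/\ p1 != p2, p1 != p3, p2 != p3 &
    [/\ regions_meet adj w loc rad p1 p2 f, regions_meet adj w loc rad p1 p3 f &
        regions_meet adj w loc rad p2 p3 f]].

End Defs.

From mathcomp Require Import all_classical all_reals ereal.
From mathcomp Require Import all_boot all_order all_algebra.
From mathcomp Require Import zify lra.
Set Implicit Arguments. Unset Strict Implicit. Unset Printing Implicit Defensive.
Import Order.TTheory GRing.Theory Num.Theory.

(* Colour every vertex by the object whose Voronoi region contains it.  For a
   normal family each colour class is connected: from any vertex of the region
   of p, the next vertex on a shortest path to loc p stays in that region, and
   loc p itself is connected and lies in it.  A type-1 singular face then has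
   three colours, so all three of its edges are bichromatic.
   Now let a sphere triangulation be coloured with k colours, every class
   inducing a connected subgraph.  The faces all of whose edges lie in class i
   number at most E_i - V_i + 1 (the cycle rank of that subgraph: peel such
   faces off one at a time through an edge whose other face is not peeled).
   Summing over i and comparing with Euler's formula V - E + F = 2 gives
   B <= 2k - 4 + 2 F', where B counts bichromatic edges and F' faces that are
   not monochromatic.  Each such face has at least two bichromatic edges and a
   rainbow face has three, so there are at most 2k - 4 rainbow faces. *)

Lemma card_bigcup_le (J T : finType) (P : pred J) (F : J -> {set T}) :
  #|\bigcup_(j | P j) F j| <= \sum_(j | P j) #|F j|.
Proof.
elim/big_rec2: _ => [|j U n _ le_Un]; first by rewrite cards0.
exact: leq_trans (leq_card_setU _ _) (leq_add (leqnn _) le_Un).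
Qed.

Lemma sum_nat_card (T : finType) (A : {set T}) (P : pred T) :
  \sum_(x in A) P x = #|[set x in A | P x]|.
Proof.
rewrite -sum1_card [RHS]big_mkcond [LHS]big_mkcond /=.
by apply: eq_bigr => x _; rewrite inE; case: (x \in A); case: (P x).
Qed.

Lemma connect_descent (T : finType) disp (R : porderType disp) (e : rel T)
    (f : T -> R) (D P : pred T) :
  (forall v, D v -> ~~ P v -> exists u, [/\ D u, e v u & (f u < f v)%O]) ->
  forall v, D v -> exists2 z, P z & connect e v z.
Proof.
move=> descent v; have [n] := ubnP #|[pred u | (f u < f v)%O]|.
elim: n v => // n IHn v lt_vn Dv; have [Pv|NPv] := boolP (P v); first by exists v.
have [u [Du vu fuv]] := descent v Dv NPv.
have [|z Pz uz] := IHn u _ Du; last by exists z => //; apply: connect_trans (connect1 vu) uz.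
rewrite -ltnS (leq_trans _ lt_vn) // ltnS proper_card //; apply/properP; split.
  by apply/subsetP => y; rewrite !inE => /lt_trans; apply.
by exists u; rewrite !inE ?fuv ?ltxx.
Qed.

(** * Colourings of sphere triangulations *)

Section ConnectedDarts.
Variable T : finType.

Definition spans_connected (C : {set T}) (A : {set T * T}) : Prop :=
  {in A, forall d, (d.2, d.1) \in A} /\
  {in C &, forall x y, connect [rel a b | (a, b) \in A] x y}.

Lemma card_spans_connected C A :
  spans_connected C A -> 2 * #|C| <= #|A| + 2.
Proof.
case=> Asym Acon; have [->|[r rC]] := set_0Vmem C; first by rewrite cards0.
pose reaches n v := [exists t : n.-tuple T,
  path [rel a b | (a, b) \in A] v t && (last v t == r)].
have reaches_ex v : exists n, (v \notin C) || reaches n v.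
  have [vC|vNC] := boolP (v \in C); last by exists 0%N; apply/orP; left.
  have /connectP [p pA rE] := Acon _ _ vC rC.
  exists (size p); apply/orP; right; apply/existsP; exists (in_tuple p).
  by rewrite pA -rE eqxx.
(* Every v in C other than the root r has a neighbour strictly closer to r; the
   darts to and from these parents are 2 (#|C| - 1) distinct darts of A. *)
pose depth v := ex_minn (reaches_ex v).
have depth_min v t : path [rel a b | (a, b) \in A] v t -> last v t == r ->
    depth v <= size t.
  move=> vt lt; rewrite /depth; case: ex_minnP => m _; apply.
  by apply/orP; right; apply/existsP; exists (in_tuple t); rewrite vt lt.
have parent_ex v : v \in C :\ r -> exists u, ((v, u) \in A) && (depth u < depth v).
  rewrite !inE => /andP [vr vC].
  have : reaches (depth v) v by rewrite /depth; case: ex_minnP => n; rewrite vC.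
  case/existsP => -[[|u t] /= /eqP sz]; first by rewrite (negbTE vr).
  case/andP => /andP [vu ut] lt; exists u; rewrite vu -sz ltnS.
  exact: depth_min.
pose parent v := odflt v [pick u | ((v, u) \in A) && (depth u < depth v)].
have parentP v : v \in C :\ r -> ((v, parent v) \in A) && (depth (parent v) < depth v).
  by move=> /parent_ex [u uP]; rewrite /parent; case: pickP => [//|/(_ u)]; rewrite uP.
pose up := [set (v, parent v) | v in C :\ r].
pose down := [set (parent v, v) | v in C :\ r].
have card_up : #|up| = #|C :\ r| by apply: card_in_imset => x y _ _ [].
have card_down : #|down| = #|C :\ r| by apply: card_in_imset => x y _ _ [].
have card_updown : #|up :|: down| = #|up| + #|down|.
  apply/eqP; rewrite (leq_card_setU up down).2; apply/pred0P => d /=.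
  apply/negP => /andP [/imsetP [x xC ->] /imsetP [y yC [xy yx]]].
  by move: (parentP x xC) (parentP y yC); rewrite -xy -yx => /andP [_ ?] /andP [_ ?]; lia.
have updown_A : up :|: down \subset A.
  apply/subsetP => d; rewrite inE => /orP [] /imsetP [x /parentP /andP [xA _] ->] //.
  exact: (Asym (x, parent x)).
have := subset_leq_card updown_A; rewrite card_updown card_up card_down (cardsD1 r C) rC add1n.
by rewrite mulnS addnC leq_add2r mul2n -addnn.
Qed.

Lemma spans_connected_setD2 C A u v x :
  spans_connected C A -> (v, x) \in A -> (x, u) \in A ->
  u != v -> x != u -> x != v ->
  spans_connected C (A :\ (u, v) :\ (v, u)).
Proof.
case=> Asym Acon vxA xuA uv xu xv.
have swapE (d e : T * T) : ((d.2, d.1) == (e.2, e.1)) = (d == e).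
  by case: d e => [a b] [c d]; rewrite !xpair_eqE andbC.
split=> [d|a b aC bC].
  by rewrite !in_setD1 -[(u, v)]/((v, u).2, (v, u).1) -[(v, u)]/((u, v).2, (u, v).1)
    !swapE => /and3P [-> -> /Asym ->].
apply: connect_sub (Acon a b aC bC) => {a b aC bC} a b /= abA.
have [abA'|] := boolP ((a, b) \in A :\ (u, v) :\ (v, u)); first exact: connect1.
rewrite !in_setD1 abA andbT negb_and !negbK => /orP [] /eqP [-> ->];
  apply: (@connect_trans _ _ x); apply: connect1;
  by rewrite /= !in_setD1 !xpair_eqE ?eqxx ?(eq_sym v u) ?(eq_sym u x) ?(eq_sym v x)
    (negbTE uv) (negbTE xu) (negbTE xv) ?andbF ?vxA ?xuA ?(Asym _ vxA) ?(Asym _ xuA).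
Qed.
End ConnectedDarts.

Section Triangulation.
Variables (V : finType) (adj : rel V) (rot : V -> V -> V).
Hypothesis triV : sphere_triangulation adj rot.

Lemma adj_sym : symmetric adj.
Proof. by case: triV => -[]. Qed.

Lemma adj_irr : irreflexive adj.
Proof. by case: triV => -[]. Qed.

Lemma adj_rot u v : adj u v -> adj v (rot v u).
Proof.
have [_ rotV _ _ _] := triV; have [rot_nbhd _] := rotV v.
by move=> uv; have := rot_nbhd u; rewrite !inE adj_sym => /(_ uv).
Qed.

Definition face_next (d : V * V) := (d.2, rot d.2 d.1).

Definition face_of (d : V * V) := face_darts rot d.1 d.2.

Lemma face_next_dart d : d \in darts adj -> face_next d \in darts adj.
Proof. by rewrite !inE; apply: adj_rot. Qed.

Lemma face_ofE d : d \in darts adj ->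
  face_of d = [set d; face_next d; face_next (face_next d)].
Proof.
case: d => u v; rewrite inE /= => uv.
by have [_ _ tri _ _] := triV; rewrite /face_next /= (tri u v uv).1.
Qed.

Lemma face_next3 d : d \in darts adj -> face_next (face_next (face_next d)) = d.
Proof.
case: d => u v; rewrite inE /= => uv.
by have [_ _ tri _ _] := triV; rewrite /face_next /= (tri u v uv).1 (tri u v uv).2.
Qed.

Lemma face_of_next d : d \in darts adj -> face_of (face_next d) = face_of d.
Proof.
move=> dD; rewrite (face_ofE (face_next_dart dD)) face_ofE // face_next3 //.
by apply/setP => e; rewrite !inE orbC orbA.
Qed.

Lemma mem_face_of d : d \in face_of d.
Proof. by case: d => u v; rewrite !inE eqxx. Qed.

Lemma face_of_mem d e : d \in darts adj -> e \in face_of d -> face_of e = face_of d.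
Proof.
move=> dD; rewrite [in e \in _]face_ofE // !inE => /orP [/orP [] | ] /eqP -> //.
  exact: face_of_next.
by rewrite !face_of_next ?face_next_dart.
Qed.

Lemma face_of_sub d : d \in darts adj -> face_of d \subset darts adj.
Proof.
move=> dD; rewrite face_ofE //; apply/subsetP => e.
rewrite !in_setU !in_set1 => /orP [/orP [] | ] /eqP -> //.
  exact: face_next_dart.
by do 2 apply: face_next_dart.
Qed.

Lemma facesP f : f \in faces adj rot -> exists2 d, d \in darts adj & f = face_of d.
Proof. by case/imsetP => d dD ->; exists d. Qed.

Lemma faces_sub f : f \in faces adj rot -> f \subset darts adj.
Proof. by case/facesP => d dD ->; apply: face_of_sub. Qed.

Lemma face_of_faces d : d \in darts adj -> face_of d \in faces adj rot.
Proof. by move=> dD; apply/imsetP; exists d. Qed.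

Lemma faces_eq f g d : f \in faces adj rot -> g \in faces adj rot ->
  d \in f -> d \in g -> f = g.
Proof.
move=> /facesP [e eD ->] /facesP [e' e'D ->] de de'.
by rewrite -(face_of_mem eD de) (face_of_mem e'D de').
Qed.

Lemma face_vertices_neq u v : adj u v ->
  [/\ u != v, v != rot v u & rot v u != u].
Proof.
move=> uv; have vx := adj_rot uv; have [_ _ tri _ _] := triV.
have xu : adj (rot v u) u by have := adj_rot vx; rewrite (tri u v uv).1.
by split; apply/eqP => e; [move: uv | move: vx | move: xu];
  rewrite [X in adj X]e adj_irr.
Qed.

Lemma faces_sub_crossing_closed (M : {set {set V * V}}) :
  [exists f in M, f \in faces adj rot] ->
  (forall f e, f \in M -> e \in f -> face_of (e.2, e.1) \in M) ->
  faces adj rot \subset M.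
Proof.
case/existsP => f0 /andP [f0M /facesP [[u0 v0] uv0 f0E]] crossM.
have [_ rotV _ connV _] := triV.
pose P d := face_of d \in M.
have P_swap d : P d -> P (d.2, d.1) by move=> Pd; apply: crossM Pd (mem_face_of d).
have P_around u v : adj u v -> P (u, v) -> forall y, adj y v -> P (y, v).
  (* The faces of (a, v) and (rot v a, v) share the edge between v and rot v a. *)
  move=> uv Puv y yv; have [rot_nbhd [_ rot_cycle]] := rotV v.
  have [uN yN] : u \in nbhd adj v /\ y \in nbhd adj v by rewrite !inE !(adj_sym v).
  rewrite -(iter_findex (rot_cycle _ _ uN yN)).
  suff /(_ (findex (rot v) u y)) [] : forall n,
      iter n (rot v) u \in nbhd adj v /\ P (iter n (rot v) u, v) by [].
  elim=> [//|n [IHn IHP]] /=; split; first exact: rot_nbhd.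
  have nD : (iter n (rot v) u, v) \in darts adj by move: IHn; rewrite !inE adj_sym.
  by apply: (P_swap (face_next (iter n (rot v) u, v))); rewrite /P face_of_next.
have P_step x z : (forall y, adj y x -> P (y, x)) -> adj x z ->
    forall y, adj y z -> P (y, z).
  move=> Px xz; apply: (P_around x) => //.
  by apply: (P_swap (z, x)); apply: Px; rewrite adj_sym.
have P_all z : forall y, adj y z -> P (y, z).
  have /connectP [p vp ->] := connV v0 z.
  have : forall y, adj y v0 -> P (y, v0).
    by apply: (P_around u0); [rewrite inE in uv0 | rewrite /P -f0E].
  elim: p v0 vp {uv0 f0E} => [|a p IHp] x /=; first by move=> _.
  case/andP => xa ap Qx.
  exact: IHp ap (P_step x a Qx xa).
by apply/subsetP => f /facesP [[a b]]; rewrite inE => /P_all ab ->.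
Qed.

Lemma exists_boundary_dart (M : {set {set V * V}}) :
  M \subset faces adj rot -> M != set0 -> ~~ (faces adj rot \subset M) ->
  exists f e, [/\ f \in M, e \in f & face_of (e.2, e.1) \notin M].
Proof.
move=> MF /set0Pn [f0 f0M] FM.
have [/existsP [f /andP [fM /existsP [e /andP [ef eM]]]]|closedM] :=
  boolP [exists f in M, exists e in f, face_of (e.2, e.1) \notin M].
  by exists f, e.
case/negP: FM; apply: faces_sub_crossing_closed.
  by apply/existsP; exists f0; rewrite f0M (subsetP MF).
move=> f e fM ef; apply: contraNT closedM => eM.
by apply/existsP; exists f; rewrite fM; apply/existsP; exists e; rewrite ef.
Qed.

(* Darts count every edge twice: the bound reads #|M| <= #E(A) - #|C| + 1. *)
Lemma faces_cycle_rank (C : {set V}) (A : {set V * V}) (M : {set {set V * V}}) :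
  spans_connected C A -> M \subset faces adj rot -> ~~ (faces adj rot \subset M) ->
  (forall f, f \in M -> f \subset A) -> 2 * (#|C| + #|M|) <= #|A| + 2.
Proof.
have [n] := ubnP #|M|; elim: n M A => // n IHn M A ltMn CA MF FM MA.
have [->|M0] := eqVneq M set0; first by rewrite cards0 addn0 card_spans_connected.
(* Peel off f: removing its edge uv keeps C connected through the third vertex. *)
have [f [[u v] [fM uvf uvM]]] := exists_boundary_dart MF M0 FM.
have fF := subsetP MF f fM; have uvD := subsetP (faces_sub fF) _ uvf.
have fE : f = face_of (u, v) := faces_eq fF (face_of_faces uvD) uvf (mem_face_of _).
have uv : adj u v by rewrite inE in uvD.
have [nuv nvx nxu] := face_vertices_neq uv; set x := rot v u in nvx nxu.
have [uvA vxA xuA] : [/\ (u, v) \in A, (v, x) \in A & (x, u) \in A].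
  by split; apply: (subsetP (MA f fM)); rewrite fE !inE eqxx ?orbT.
have card_M : #|M| = #|M :\ f|.+1 by rewrite (cardsD1 f M) fM.
have card_A : #|A| = #|A :\ (u, v) :\ (v, u)| + 2.
  have vuA : (v, u) \in A :\ (u, v).
    by rewrite in_setD1 xpair_eqE negb_and eq_sym nuv (CA.1 (u, v)).
  by rewrite (cardsD1 (u, v) A) uvA (cardsD1 (v, u)) vuA !add1n addn2.
suff : 2 * (#|C| + #|M :\ f|) <= #|A :\ (u, v) :\ (v, u)| + 2.
  by move=> le_CMA; rewrite card_M card_A addnS mulnS addnC leq_add2r.
apply: IHn.
- by rewrite -ltnS -card_M.
- by apply: (spans_connected_setD2 (x := x)); rewrite // eq_sym.
- exact: subset_trans (subD1set M f) MF.
- by apply: contra FM => /subset_trans; apply; apply: subD1set.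
- move=> g; rewrite in_setD1 => /andP [gf gM]; apply/subsetP => e eg.
  have gF := subsetP MF g gM.
  rewrite !in_setD1 (subsetP (MA g gM) e eg) andbT; apply/andP; split.
    apply: contraNneq uvM => eE /=; rewrite -eE.
    by rewrite -(faces_eq gF (face_of_faces (subsetP (faces_sub gF) e eg)) eg (mem_face_of e)).
  by apply: contra_neq gf => eE; apply: faces_eq gF fF eg _; rewrite eE.
Qed.

Section Colouring.
Variables (I : finType) (c : V -> I).
Hypothesis c_connected : forall i, induced_connected adj [set v | c v == i].

Definition mono_darts i := [set d in darts adj | (c d.1 == i) && (c d.2 == i)].

Definition bichromatic := [set d in darts adj | c d.1 != c d.2].

Definition mono_faces i := [set f in faces adj rot | f \subset mono_darts i].

Lemma spans_connected_mono i : spans_connected [set v | c v == i] (mono_darts i).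
Proof.
split=> [[a b]|a b aC bC]; first by rewrite !inE /= => /and3P [ab -> ->]; rewrite adj_sym ab.
apply: connect_sub (c_connected aC bC) => {a b aC bC} a b /= /and3P [ab aC bC].
by apply: connect1; move: aC bC; rewrite /= !inE ab => -> ->.
Qed.

Lemma card_colour_classes : #|V| = \sum_i #|[set v | c v == i]|.
Proof.
rewrite -sum1_card (partition_big c predT) //=.
by apply: eq_bigr => i _; rewrite -sum1dep_card.
Qed.

Lemma card_darts_colours :
  #|darts adj| = \sum_i #|mono_darts i| + #|bichromatic|.
Proof.
rewrite -sum1_card (bigID (fun d => c d.1 == c d.2)) /=; congr (_ + _).
  rewrite (partition_big (fun d => c d.1) predT) //=.
  apply: eq_bigr => i _; rewrite -sum1_card; apply: eq_bigl => d.
  by rewrite !inE; case: (c d.1 =P i) => [->|_]; rewrite ?andbF ?andbT // (eq_sym i).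
by rewrite -sum1_card; apply: eq_bigl => d; rewrite !inE.
Qed.

Lemma sum_faces_bichromatic :
  \sum_(f in faces adj rot) #|f :&: bichromatic| <= #|bichromatic|.
Proof.
rewrite (eq_bigr (fun f : {set V * V} => \sum_(d in bichromatic) (d \in f : nat)))
  => [|f _]; last first.
  by rewrite sum_nat_card; apply: eq_card => d; rewrite !inE andbC.
rewrite exchange_big /= -sum1_card; apply: leq_sum => d _; rewrite sum_nat_card.
apply/card_le1P => f; rewrite inE => /andP [fF df] g; rewrite !inE.
by apply/andP/eqP => [[gF dg]|->]; [apply: faces_eq gF fF dg df | rewrite fF].
Qed.

Lemma card_face_bichromatic u v (x := rot v u) : adj u v ->
  #|face_of (u, v) :&: bichromatic| = (c u != c v) + (c v != c x) + (c x != c u).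
Proof.
move=> uv; have [nuv nvx nxu] := face_vertices_neq uv.
have uvD : (u, v) \in darts adj by rewrite inE.
have /subsetP fD := face_of_sub uvD.
have -> : face_of (u, v) :&: bichromatic =
    [set d in [seq d <- [:: (u, v); (v, x); (x, u)] | c d.1 != c d.2]].
  apply/setP => d; rewrite in_setI [in RHS]inE mem_filter andbC.
  have [dF|dNF] := boolP (d \in face_of (u, v)).
    by have := fD d dF; move: dF; rewrite !inE -orbA andbT andbC => -> ->.
  by move: dNF; rewrite !inE -orbA andbF => /negbTE ->; rewrite andbF.
rewrite cardsE (card_uniqP _).
  by rewrite size_filter /= addn0 addnA.
by rewrite filter_uniq //= !inE !xpair_eqE (negbTE nuv) (negbTE nvx) [v == u]eq_sym
  (negbTE nuv) !andbF.
Qed.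

Definition monochromatic_faces := \bigcup_i mono_faces i.

Lemma face_bichromatic_count f : f \in faces adj rot ->
  2 * (f \notin monochromatic_faces) + (f \subset bichromatic) <= #|f :&: bichromatic|.
Proof.
case/facesP => -[u v] uvD ->; have uv : adj u v by rewrite inE in uvD.
rewrite card_face_bichromatic //; set x := rot v u.
have [uvf vxf xuf] : [/\ (u, v) \in face_of (u, v), (v, x) \in face_of (u, v)
    & (x, u) \in face_of (u, v)] by rewrite !inE !eqxx ?orbT.
have notB d : d \in face_of (u, v) -> c d.1 = c d.2 ->
    (face_of (u, v) \subset bichromatic) = false.
  by move=> df e; apply/negbTE/negP => /subsetP /(_ d df); rewrite inE e eqxx andbF.
have [cuv|cuv] := eqVneq (c u) (c v).
  rewrite (notB _ uvf cuv) cuv /= addn0 (eq_sym (c x)).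
  have [cvx|] := eqVneq (c v) (c x); last by case: (_ \notin _).
  rewrite leqn0 muln_eq0 /= eqb0 negbK; apply/bigcupP; exists (c v) => //.
  rewrite !inE face_of_faces //=; apply/subsetP => d df.
  rewrite inE (subsetP (face_of_sub uvD)) //=.
  by move: df; rewrite !inE -orbA => /or3P [] /eqP -> /=; rewrite -?cvx ?cuv eqxx.
have [cvx|cvx] := eqVneq (c v) (c x).
  by rewrite (notB _ vxf cvx) -cvx eq_sym cuv; case: (_ \notin _).
have [cxu|cxu] := eqVneq (c x) (c u).
  by rewrite (notB _ xuf cxu); case: (_ \notin _).
by case: (_ \notin _); case: (_ \subset _).
Qed.

Lemma card_faces_monochromatic : #|faces adj rot| =
  #|monochromatic_faces| + #|[set f in faces adj rot | f \notin monochromatic_faces]|.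
Proof.
rewrite -(cardsID monochromatic_faces (faces adj rot)); congr (_ + _).
  apply: eq_card => f; rewrite !inE; apply/andP/idP => [[] //|fM]; split=> //.
  by case/bigcupP: fM => i _; rewrite inE => /andP [].
by apply: eq_card => f; rewrite !inE andbC.
Qed.

Lemma card_faces_bichromatic :
  2 * #|[set f in faces adj rot | f \notin monochromatic_faces]|
    + #|[set f in faces adj rot | f \subset bichromatic]| <= #|bichromatic|.
Proof.
rewrite -(sum_nat_card _ (fun f : {set V * V} => f \notin monochromatic_faces)).
rewrite -(sum_nat_card _ (fun f : {set V * V} => f \subset bichromatic)).
rewrite big_distrr -big_split /=.
apply: leq_trans sum_faces_bichromatic; apply: leq_sum => f fF.
exact: face_bichromatic_count.
Qed.

Lemma rainbow_face_not_mono i g : g \in faces adj rot ->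
  {in g, forall d, c d.1 != c d.2} -> g \notin mono_faces i.
Proof.
move=> gF g_rainbow; rewrite inE gF; apply/subsetPn.
have [d dD gE] := facesP gF; have dg : d \in g by rewrite gE mem_face_of.
exists d; rewrite // inE; apply/negP => /and3P [_ /eqP d1 /eqP d2].
by move: (g_rainbow d dg); rewrite d1 d2 eqxx.
Qed.

Theorem rainbow_faces_le (S : {set {set V * V}}) :
  (forall f, f \in S -> f \in faces adj rot /\ {in f, forall d, c d.1 != c d.2}) ->
  #|S| <= 2 * #|I| - 4.
Proof.
move=> S_rainbow; have [->|[g gS]] := set_0Vmem S; first by rewrite cards0.
have [gF g_rainbow] := S_rainbow g gS.
have cycle_rank i :
    2 * (#|[set v | c v == i]| + #|mono_faces i|) <= #|mono_darts i| + 2.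
  apply: faces_cycle_rank (spans_connected_mono i) _ _ _.
  - by apply/subsetP => f; rewrite inE => /andP [].
  - by apply/subsetPn; exists g => //; apply: rainbow_face_not_mono.
  - by move=> f; rewrite inE => /andP [].
have : \sum_i 2 * (#|[set v | c v == i]| + #|mono_faces i|) <=
    \sum_i (#|mono_darts i| + 2) by apply: leq_sum => i _.
rewrite -big_distrr big_split big_split /= -card_colour_classes sum_nat_const.
have [_ _ _ _ euler] := triV.
have S_rainbow_faces : #|S| <= #|[set f in faces adj rot | f \subset bichromatic]|.
  apply/subset_leq_card/subsetP => f fS; have [fF f_rainbow] := S_rainbow f fS.
  by rewrite inE fF; apply/subsetP => d df; rewrite inE f_rainbow // (subsetP (faces_sub fF)).
move: euler card_darts_colours (card_bigcup_le predT mono_faces) card_faces_monochromatic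
  card_faces_bichromatic S_rainbow_faces.
move: #|V| #|faces adj rot| #|darts adj| (\sum_i #|mono_darts i|) #|bichromatic|.
move: #|monochromatic_faces| (\sum_i #|mono_faces i|).
move: #|[set f in faces adj rot | f \notin monochromatic_faces]|.
move: #|[set f in faces adj rot | f \subset bichromatic]| #|S| #|I|.
lia.
Qed.

End Colouring.

End Triangulation.

(** * Voronoi regions of a normal family *)

Section FiniteInf.
Variable R : realType.
Local Open Scope classical_set_scope.
Local Open Scope ereal_scope.

Lemma ereal_inf_in_seq (S : set (\bar R)) (s : seq (\bar R)) :
  S `<=` [set x | x \in s] -> S !=set0 -> S (ereal_inf S).
Proof.
move=> Ss S0; suff [m Sm m_min] : exists2 m, S m & lbound S m.
  by have -> : ereal_inf S = m by apply/le_anti; rewrite ereal_inf_lbound // le_ereal_inf_tmp.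
elim: s S Ss S0 => [|a s IHs] S Ss [x Sx]; first by have := Ss x Sx.
have Sas y : S y -> y = a \/ y \in s.
  by move/Ss; rewrite /= in_cons => /orP [/eqP|]; [left|right].
have [[y [Sy ys]]|Ss_empty] := pselect (exists y, S y /\ y \in s); last first.
  have {}Sas y : S y -> y = a.
    by move=> Sy; case: (Sas y Sy) => // ys; case: Ss_empty; exists y.
  by exists a => [|y /Sas ->]; rewrite -?(Sas x Sx).
have [m [Sm _] m_min] :=
  IHs [set y | S y /\ y \in s] (fun z => @proj2 _ _) (ex_intro _ y (conj Sy ys)).
have m_lb z : S z -> z != a -> m <= z.
  by move=> Sz za; case: (Sas z Sz) => [/eqP|zs]; [rewrite (negbTE za) | apply: m_min].
have [Sa|Sna] := pselect (S a); last first.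
  by exists m => // z Sz; apply: m_lb => //; apply/eqP => za; apply: Sna; rewrite -za.
have [am|ma] := leP a m.
  exists a => // z Sz; have [->//|za] := eqVneq z a; exact: le_trans am (m_lb z Sz za).
exists m => // z Sz; have [->|za] := eqVneq z a; [exact: ltW | exact: m_lb].
Qed.

End FiniteInf.

Section Voronoi.
Variables (R : realType) (V : finType) (adj : rel V) (w : V -> V -> R).
Hypotheses (sym_adj : symmetric adj) (irr_adj : irreflexive adj).
Hypotheses (w_pos : pos_weights adj w) (conn_adj : forall u v, connect adj u v).
Local Open Scope ring_scope.
Local Notation W := (walk_weight w).

Lemma walk_weight_cat x p q : W x (p ++ q) = W x p + W (last x p) q.
Proof. by elim: p x => [|a p IHp] x /=; rewrite ?add0r // IHp addrA. Qed.

Lemma walk_weight_ge0 x p : path adj x p -> 0 <= W x p.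
Proof.
elim: p x => [//|a p IHp] x /= /andP [xa ap].
by rewrite addr_ge0 ?IHp // ltW // (w_pos xa).2.
Qed.

Lemma walk_shorten x t : path adj x t ->
  exists2 s, is_path adj x (last x t) s & W x s <= W x t.
Proof.
elim: t x => [|a t IHt] x /=; first by exists [::]; rewrite /is_path //= eqxx.
case/andP => xa /IHt [s /and3P [as_ us /eqP ls] le_st].
have w_xa := (w_pos xa).2.
have [xs|xNs] := boolP (x \in a :: s); last first.
  exists (a :: s); last by rewrite /= lerD2l.
  by apply/and3P; split; rewrite ?cons_uniq ?xNs //= ?xa ?ls.
have {}xs : x \in s.
  by move: xs; rewrite in_cons => /predU1P [xa'|//]; rewrite xa' irr_adj in xa.
case/splitPr: xs as_ us ls le_st => s1 s2 as_ us ls le_st.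
exists s2.
  move: as_ us; rewrite cat_path -cat_cons cat_uniq => /and3P [_ _ xs2] /and3P [_ _ us2].
  by apply/and3P; split => //; rewrite -ls last_cat.
move: as_ le_st; rewrite cat_path walk_weight_cat /= => /and3P [as1 lx _].
have := walk_weight_ge0 as1; have := (w_pos lx).2; lra.
Qed.

Lemma dist_attained u v :
  exists2 s, is_path adj u v s & dist adj w u v = (W u s)%:E.
Proof.
pose S := [set (W u s)%:E | s in [set s | is_path adj u v s]]%classic.
pose short := [seq tval t | n <- iota 0 #|V|, t <- enum {: n.-tuple V}].
suff [s sP e] : S (ereal_inf S) by exists s => //; exact: esym e.
apply: (@ereal_inf_in_seq _ _ [seq (W u s)%:E | s <- short]).
  move=> _ [s /and3P [_ us _] <-]; apply: map_f; apply/allpairsPdep.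
  exists (size s), (in_tuple s); split; rewrite ?mem_enum // mem_iota add0n.
  by rewrite -[(size s).+1]/(size (u :: s)) -(card_uniqP us) max_card.
have /connectP [t ut vE] := conn_adj u v; have [s sP _] := walk_shorten ut.
by exists (W u s)%:E, s; rewrite //= vE.
Qed.

Definition rdist u v := fine (dist adj w u v).

Lemma distE u v : dist adj w u v = (rdist u v)%:E.
Proof. by rewrite /rdist; have [s _ ->] := dist_attained u v. Qed.

Lemma rdist_attained u v : exists2 s, is_path adj u v s & rdist u v = W u s.
Proof. by have [s sP e] := dist_attained u v; exists s; rewrite // /rdist e. Qed.

Lemma rdist_le_walk u t : path adj u t -> rdist u (last u t) <= W u t.
Proof.
case/walk_shorten => s sP le_st; apply: le_trans le_st.
by rewrite -lee_fin -distE; apply: ereal_inf_lbound; exists s.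
Qed.

Lemma rdist_ge0 u v : 0 <= rdist u v.
Proof. by have [s /and3P [us _ _] ->] := rdist_attained u v; apply: walk_weight_ge0. Qed.

Lemma rdistxx u : rdist u u = 0.
Proof. by apply/le_anti; rewrite rdist_ge0 (rdist_le_walk (u := u) (t := [::])). Qed.

Lemma rdist_le_stepr z a u : adj a u -> rdist z u <= rdist z a + w a u.
Proof.
move=> au; have [s /and3P [zs _ /eqP zsa] ->] := rdist_attained z a.
have := @rdist_le_walk z (rcons s u); rewrite last_rcons -cats1 walk_weight_cat /= zsa.
by rewrite addr0; apply; rewrite cat_path zs /= zsa au.
Qed.

Lemma rdistC u v : rdist u v = rdist v u.
Proof.
suff le_rdist x y : rdist y x <= rdist x y by apply/le_anti; rewrite !le_rdist.
have [s /and3P [xs _ /eqP <-] ->] := rdist_attained x y.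
elim: s x xs => [|a s IHs] x /=; first by rewrite rdistxx.
case/andP => xa /IHs le_sa; rewrite (w_pos xa).1 addrC.
have ax : adj a x by rewrite sym_adj.
by apply: le_trans (rdist_le_stepr _ ax) _; rewrite lerD2r.
Qed.

Lemma rdist_le_stepl v u z : adj v u -> rdist v z <= w v u + rdist u z.
Proof.
by move=> vu; rewrite rdistC (rdistC u) addrC (w_pos vu).1 rdist_le_stepr // sym_adj.
Qed.

Definition set_dist v (Y : {set V}) := fine (distS adj w [set v] Y).

Lemma distS1_attained v (Y : {set V}) : Y != set0 ->
  exists2 y, y \in Y & distS adj w [set v] Y = (rdist v y)%:E.
Proof.
case/set0Pn => y0 y0Y.
pose S := [set dist adj w x y |
  x in [set x | x \in [set v]%SET] & y in [set y | y \in Y]]%classic.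
suff [x /= /set1P -> [y /= yY e]] : S (ereal_inf S).
  by exists y; rewrite // -distE; exact: esym e.
apply: (@ereal_inf_in_seq _ _ [seq dist adj w v y | y <- enum Y]).
  by move=> _ [x /= /set1P -> [y /= yY <-]]; apply: map_f; rewrite mem_enum.
by exists (dist adj w v y0), v; rewrite /= ?set11 //; exists y0.
Qed.

Lemma distS_le (X Y : {set V}) x y : x \in X -> y \in Y ->
  (distS adj w X Y <= (rdist x y)%:E)%E.
Proof. by move=> xX yY; rewrite -distE; apply: ereal_inf_lbound; exists x => //; exists y. Qed.

Lemma distS1E v (Y : {set V}) : Y != set0 ->
  distS adj w [set v] Y = (set_dist v Y)%:E.
Proof. by case/(distS1_attained v) => y _; rewrite /set_dist => ->. Qed.

Lemma set_dist_attained v (Y : {set V}) : Y != set0 ->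
  exists2 y, y \in Y & set_dist v Y = rdist v y.
Proof. by case/(distS1_attained v) => y yY e; exists y; rewrite // /set_dist e. Qed.

Lemma set_dist_le v (Y : {set V}) y : y \in Y -> set_dist v Y <= rdist v y.
Proof.
move=> yY; rewrite -lee_fin -distS1E -?distE; last by apply/set0Pn; exists y.
by apply: ereal_inf_lbound; exists v; rewrite /= ?set11 //; exists y.
Qed.

Lemma set_dist_stepl v u (Y : {set V}) : Y != set0 -> adj v u ->
  set_dist v Y <= w v u + set_dist u Y.
Proof.
move=> Y0 vu; have [y yY ->] := set_dist_attained u Y0.
exact: le_trans (set_dist_le v yY) (rdist_le_stepl _ vu).
Qed.

Lemma set_dist_descent v (Y : {set V}) : Y != set0 -> v \notin Y ->
  exists2 u, adj v u & w v u + set_dist u Y <= set_dist v Y.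
Proof.
move=> Y0 vNY; have [y yY ->] := set_dist_attained v Y0.
have [[|u s] /and3P [/= vs _ /eqP ls] ->] := rdist_attained v y.
  by move: yY; rewrite -ls /= (negbTE vNY).
case/andP: vs => vu us; exists u => //=; rewrite lerD2l.
by apply: le_trans (set_dist_le u yY) _; rewrite -ls rdist_le_walk.
Qed.

Variables (I : finType) (loc : I -> {set V}) (rad : I -> R) (p0 : I).
Hypotheses (objects : valid_objects adj loc rad) (gen : generic adj w rad).
Hypothesis normal : normal_family adj w loc rad.

Definition wdist p v := set_dist v (loc p) - rad p.

Lemma loc_neq0 p : loc p != set0.
Proof. by have [] := objects p. Qed.

Lemma in_voronoiE p v :
  in_voronoi adj w loc rad p v <-> forall q, wdist p v <= wdist q v.
Proof.
by split=> le_pq q; move: (le_pq q); rewrite /wdist !distS1E ?loc_neq0 // -!EFinB lee_fin.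
Qed.

Lemma wdist_inj v p q : wdist p v = wdist q v -> p = q.
Proof.
rewrite /wdist; have [x xp ->] := set_dist_attained v (loc_neq0 p).
have [y yq ->] := set_dist_attained v (loc_neq0 q).
move=> e; have := gen.1 (Some p) (Some q) v x v y.
by rewrite /shifted_dist !distE -!EFinB e => /(_ erefl) [[]].
Qed.

(* p0 only witnesses that I is nonempty, see voronoi_cellP. *)
Definition voronoi_cell v := [arg min_(p < p0) wdist p v]%O.

Lemma voronoi_cellP p v : in_voronoi adj w loc rad p v <-> voronoi_cell v = p.
Proof.
rewrite in_voronoiE /voronoi_cell; case: arg_minP => // q _ q_min.
split=> [p_min|<- j]; last exact: q_min.
by apply: (@wdist_inj v); apply/le_anti; rewrite p_min q_min.
Qed.

Lemma voronoi_cell_loc p v : v \in loc p -> voronoi_cell v = p.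
Proof.
move=> vp; apply/voronoi_cellP/in_voronoiE => q.
have [->|qp] := eqVneq q p; first exact: lexx.
have vp0 : set_dist v (loc p) <= 0 by rewrite -(rdistxx v) set_dist_le.
have [y yq vy] := set_dist_attained v (loc_neq0 q).
have := lt_le_trans (normal qp).2 (distS_le yq vp).
by rewrite lte_fin rdistC -vy /wdist; lra.
Qed.

Lemma voronoi_cell_descent p v : voronoi_cell v = p -> v \notin loc p ->
  exists u, [/\ voronoi_cell u = p, adj v u & set_dist u (loc p) < set_dist v (loc p)].
Proof.
(* One step along a shortest path to loc p lowers wdist p by w v u, and no
   other wdist q by more than that. *)
move=> /voronoi_cellP /in_voronoiE v_min vNp.
have [u vu le_u] := set_dist_descent (loc_neq0 p) vNp; have w_vu := (w_pos vu).2.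
exists u; split=> //; last by lra.
apply/voronoi_cellP/in_voronoiE => q; have := v_min q.
by have := set_dist_stepl (loc_neq0 q) vu; rewrite /wdist; lra.
Qed.

Lemma voronoi_cell_connected p : induced_connected adj [set v | voronoi_cell v == p].
Proof.
set C := [set v | _]; pose e := [rel a b | [&& adj a b, a \in C & b \in C]].
have e_sym : connect_sym e.
  by apply: sym_connect_sym => a b /=; rewrite sym_adj (andbC (a \in C)).
have to_loc v : v \in C -> exists2 z, z \in loc p & connect e v z.
  apply: (connect_descent (f := set_dist^~ (loc p)) (D := mem C) (P := mem (loc p))).
  move=> {}v; rewrite /= inE => /eqP vp vNp.
  have [u [up vu lt_uv]] := voronoi_cell_descent vp vNp.
  by exists u; rewrite !inE /= vu up vp eqxx.
move=> x y xC yC; have [zx zxp xzx] := to_loc x xC; have [zy zyp yzy] := to_loc y yC.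
apply: connect_trans xzx _; rewrite e_sym in yzy; apply: connect_trans _ yzy.
have [_ [loc_conn _]] := objects p.
apply: connect_sub (loc_conn _ _ zxp zyp) => a b /and3P [ab ap bp].
by apply: connect1; rewrite /= !inE ab (voronoi_cell_loc ap) (voronoi_cell_loc bp) eqxx.
Qed.

End Voronoi.

Lemma type1_singular_rainbow (R : realType) (V : finType) (adj : rel V)
    (rot : V -> V -> V) (w : V -> V -> R) (I : finType) (loc : I -> {set V})
    (rad : I -> R) (c : V -> I) f :
  (forall p v, in_voronoi adj w loc rad p v <-> c v = p) ->
  f \in faces adj rot -> type1_singular adj w loc rad f -> {in f, forall d, c d.1 != c d.2}.
Proof.
move=> cellP /facesP [[u v] _ ->] [p1 [p2 [p3 [n12 n13 n23]]]].
case=> -[a [b [fa fb /cellP ca /cellP cb]]] [_ [b' [_ fb' _ /cellP cb']]] _.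
set x := rot v u.
have fv z : z \in face_vertices (face_of rot (u, v)) -> c z \in [:: c u; c v; c x].
  by case/imsetP => d; rewrite /face_of /face_darts /= !inE -orbA => /or3P [] /eqP -> ->;
    rewrite /= eqxx ?orbT.
have : uniq [:: c u; c v; c x].
  apply: (@leq_size_uniq _ [:: p1; p2; p3]) => //.
    by rewrite /= !inE negb_or n12 n13 n23.
  by apply/allP; rewrite /= -ca -cb -cb' !fv.
rewrite /= !inE negb_or => /and3P [/andP [nuv nux] nvx _] d.
by rewrite !inE -orbA => /or3P [] /eqP -> //=; rewrite eq_sym.
Qed.

Local Open Scope classical_set_scope.

Theorem lemma4p8 (R : realType) (V : finType) (adj : rel V) (rot : V -> V -> V)
    (w : V -> V -> R) (loc : 'I_3 -> {set V}) (rad : 'I_3 -> R) :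
  sphere_triangulation adj rot ->
  pos_weights adj w ->
  valid_objects adj loc rad ->
  generic adj w rad ->
  normal_family adj w loc rad ->
  forall S : {set {set V * V}},
    (forall f, f \in S -> f \in faces adj rot /\ type1_singular adj w loc rad f) ->
    (#|S| <= 2)%N.
Proof.
move=> triV w_pos objects gen normal S S_type1.
have [[sym_adj irr_adj] _ _ conn_adj _] := triV.
have cellP := voronoi_cellP irr_adj w_pos conn_adj ord0 objects gen.
suff : #|S| <= 2 * #|'I_3| - 4 by rewrite card_ord.
apply: (rainbow_faces_le triV (c := voronoi_cell adj w loc rad ord0)).
  exact: voronoi_cell_connected.
by move=> f /S_type1 [fF f_type1]; split; last exact: type1_singular_rainbow cellP fF f_type1.
Qed.
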